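(* Let $QF(1)$ be the subgroup of $QF$ consisting of those elements fixing every word that does not begin with the letter $1$. Then $QF(1)\cong QF$, and there is an injective, non-surjective-allowed endomorphism $\theta$ of $QF(1)$ (namely conjugation by $\alpha$) such that $QF$ is isomorphic to the ascending HNN-extension $QF(1)\ast_{\theta,t}=\langle QF(1),t\mid t^{-1}ht=\theta(h),\ h\in QF(1)\rangle$.
   Context: Let $\{0,1\}^*$ be the finite words over $\{0,1\}$, the vertices of the rooted binary tree in which $x$ has children $x0$ and $x1$ (two edge colours). $QV$ is the group of bijections $\tau$ of $\{0,1\}^*$ with $\tau(x0)=\tau(x)0$ and $\tau(x1)=\tau(x)1$ for all but finitely many $x$. Each such $\tau$ induces a homeomorphism $\pi(\tau)$ of $\{0,1\}^{\mathbb N}$ by $\pi(\tau)(\ell\omega)=\tau(\ell)\omega$, for $\ell$ in a finite maximal prefix-antichain $L$ with $\tau(\ell s)=\tau(\ell)s$ for all $\ell\in L$ and words $s$; this gives a homomorphism $\pi$ onto Thompson's group $V$. $F\le V$ is the subgroup of lexicographic-order-preserving elements and $QF=\pi^{-1}(F)$. The element $\alpha\in QF$ is the bijection with $\alpha(\varepsilon)=0$, $\alpha(1)=\varepsilon$, $\alpha(0s)=00s$, $\alpha(10s)=01s$, $\alpha(11s)=1s$ for all words $s$ ($\varepsilon$ the empty word). An HNN-extension is ascending if $\theta$ is injective. *)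

(* Words over {0,1}: 0 = false, 1 = true. *)
From mathcomp Require Import all_boot.
Set Implicit Arguments. Unset Strict Implicit. Unset Printing Implicit Defensive.

Definition word := seq bool.
Definition stream := nat -> bool.
Definition perm_word := word -> word.

Definition app_stream (l : word) (w : stream) : stream :=
  fun n => if n < size l then nth false l n else w (n - size l).

Definition lexlt (x y : stream) : Prop :=
  exists n, (forall i, i < n -> x i = y i) /\ x n = false /\ y n = true.

Definition max_antichain (L : seq word) : Prop :=
  uniq L /\
  (forall l l', l \in L -> l' \in L -> l != l' -> ~~ prefix l l') /\
  (forall w : word, exists2 l, l \in L & prefix l w || prefix w l).

Definition inQV (tau : perm_word) : Prop :=
  bijective tau /\
  exists S : seq word, forall x : word, x \notin S ->
    tau (rcons x false) = rcons (tau x) false /\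
    tau (rcons x true) = rcons (tau x) true.

(* pi(tau) in F: for some finite maximal prefix-antichain L with
   tau(l s) = tau(l) s, the induced map pi(tau)(l w) = tau(l) w on {0,1}^N
   preserves the lexicographic order *)
Definition inQF (tau : perm_word) : Prop :=
  inQV tau /\
  exists L : seq word, max_antichain L /\
    (forall l s, l \in L -> tau (l ++ s) = tau l ++ s) /\
    (forall l l' (w w' : stream), l \in L -> l' \in L ->
        lexlt (app_stream l w) (app_stream l' w') ->
        lexlt (app_stream (tau l) w) (app_stream (tau l') w')).

Definition inQF1 (tau : perm_word) : Prop :=
  inQF tau /\ forall w : word, head false w = false -> tau w = w.

Definition alpha (w : word) : word :=
  match w with
  | [::] => [:: false]
  | false :: s => false :: false :: s
  | [:: true] => [::]
  | true :: false :: s => false :: true :: s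
  | true :: true :: s => true :: s
  end.

Definition alpha_inv (w : word) : word :=
  match w with
  | [::] => [:: true]
  | [:: false] => [::]
  | false :: false :: s => false :: s
  | false :: true :: s => true :: false :: s
  | true :: s => true :: true :: s
  end.

(* theta = conjugation by alpha: theta(h) = alpha^-1 h alpha
   (group product = composition of maps, (g h)(x) = g (h x)) *)
Definition theta (h : perm_word) : perm_word := alpha_inv \o h \o alpha.

Record group := Group {
  gcar : Type;
  gmul : gcar -> gcar -> gcar;
  gone : gcar;
  ginv : gcar -> gcar;
  gmulA : forall x y z, gmul x (gmul y z) = gmul (gmul x y) z;
  gmul1 : forall x, gmul gone x = x;
  gmulV : forall x, gmul (ginv x) x = gone
}.

Definition hom_on (G : perm_word -> Prop) (K : group) (f : perm_word -> gcar K) :=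
  forall g h, G g -> G h -> f (g \o h) = gmul (f g) (f h).

Definition iso_on (G H : perm_word -> Prop) (phi : perm_word -> perm_word) :=
  (forall g, G g -> H (phi g)) /\
  (forall g h, G g -> G h -> phi (g \o h) = phi g \o phi h) /\
  (forall g h, G g -> G h -> phi g = phi h -> g = h) /\
  (forall k, H k -> exists2 g, G g & phi g = k).

(* H is (isomorphic to) the ascending HNN-extension
   G *_{th,t} = < G, t | t^-1 h t = th(h), h in G >,
   characterised by the universal property of this presentation. *)
Definition is_HNN (G : perm_word -> Prop) (th : perm_word -> perm_word)
    (H : perm_word -> Prop) : Prop :=
  exists (iota : perm_word -> perm_word) (t tinv : perm_word),
    (forall g, G g -> H (iota g)) /\
    (forall g h, G g -> G h -> iota (g \o h) = iota g \o iota h) /\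
    H t /\ H tinv /\ t \o tinv = id /\ tinv \o t = id /\
    (forall h, G h -> tinv \o iota h \o t = iota (th h)) /\
    (forall (K : group) (f : perm_word -> gcar K) (k : gcar K),
       hom_on G f ->
       (forall h, G h -> gmul (gmul (ginv k) (f h)) k = f (th h)) ->
       exists F : perm_word -> gcar K,
         hom_on H F /\ (forall g, G g -> F (iota g) = f g) /\ F t = k /\
         (forall F' : perm_word -> gcar K,
            hom_on H F' -> (forall g, G g -> F' (iota g) = f g) -> F' t = k ->
            forall x, H x -> F' x = F x)).

From Stdlib Require Import Setoid FunctionalExtensionality ClassicalEpsilon.
From mathcomp Require Import all_boot.
Set Implicit Arguments. Unset Strict Implicit. Unset Printing Implicit Defensive.

(* Restricting to the subtree below the letter 1 identifies QF(1) with QF.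
   Every element of F fixes the leftmost point 000..., so an element t of QF
   sends 0^N to some 0^j once N exceeds the depth of t; as alpha^n acts on the
   words beginning with 0 by prepending 0^n, this gives t = alpha^j h alpha^-N
   with h in QF(1).  Such normal forms alpha^m h alpha^-n are unique up to the
   moves (m, h, n) ~ (m + d, theta^d h, n + d), which is exactly what makes
   alpha^m h alpha^-n |-> k^m f(h) k^-n a well-defined homomorphism whenever f
   and k satisfy the HNN relations: this is the universal property. *)

(** * Streams and the lexicographic order *)

Definition zero_stream : stream := fun _ => false.

Definition scons (b : bool) (s : stream) : stream :=
  fun n => if n is n'.+1 then s n' else b.

Lemma app_stream_nil w : app_stream [::] w = w.
Proof. by apply: functional_extensionality => n; rewrite /app_stream subn0. Qed.

Lemma app_stream_cons b x w : app_stream (b :: x) w = scons b (app_stream x w).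
Proof.
by apply: functional_extensionality => -[|n] //; rewrite /app_stream /= ltnS subSS.
Qed.

Lemma app_stream_cat x y w : app_stream (x ++ y) w = app_stream x (app_stream y w).
Proof. by elim: x => [|b x IH]; rewrite ?app_stream_nil //= !app_stream_cons IH. Qed.

Lemma app_stream_nseq_false n : app_stream (nseq n false) zero_stream = zero_stream.
Proof.
elim: n => [|n IH]; rewrite ?app_stream_nil //= app_stream_cons IH.
by apply: functional_extensionality => -[].
Qed.

Lemma lexlt_scons a s a' s' :
  lexlt (scons a s) (scons a' s') <->
  (a = false /\ a' = true) \/ (a = a' /\ lexlt s s').
Proof.
split=> [[[|n] [eq_lt [sn s'n]]]|[[-> ->]|[-> [n [eq_lt [sn s'n]]]]]].
- by left.
- right; split; first exact: (eq_lt 0).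
  by exists n; split=> // i lt_in; apply: (eq_lt i.+1).
- by exists 0.
- by exists n.+1; split=> // -[|i] lt_in //; apply: eq_lt.
Qed.

Lemma lexlt_zero_stream_r s : ~ lexlt s zero_stream.
Proof. by move=> [n [_ []]]. Qed.

Lemma lexlt_zero_stream_app x :
  true \in x -> lexlt zero_stream (app_stream x zero_stream).
Proof.
move=> xt; have lt_ix : index true x < size x by rewrite index_mem.
exists (index true x); split=> [i lt_i|]; rewrite /app_stream.
  by rewrite (ltn_trans lt_i lt_ix); have := before_find false lt_i; case: nth.
by rewrite lt_ix nth_index.
Qed.

Lemma notin_true_nseq x : true \notin x -> x = nseq (size x) false.
Proof. by move=> xt; apply/all_pred1P/allP => -[] // /(negP xt). Qed.

(** * Membership in QF at a fixed depth *)

Definition words n : seq word := [seq val t | t : n.-tuple bool].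

Definition words_below N : seq word := [seq x | n <- iota 0 N, x <- words n].

Lemma mem_words x : x \in words (size x).
Proof. by apply/mapP; exists (in_tuple x); rewrite ?mem_enum. Qed.

Lemma size_words n x : x \in words n -> size x = n.
Proof. by case/mapP=> t _ ->; rewrite size_tuple. Qed.

Lemma uniq_words n : uniq (words n).
Proof. by rewrite map_inj_uniq ?enum_uniq //; exact: val_inj. Qed.

Lemma mem_words_below N x : size x < N -> x \in words_below N.
Proof.
move=> lt_xN; apply: (allpairs_f_dep (fun _ y => y) _ (mem_words x)).
by rewrite mem_iota.
Qed.

Definition suffix_stable_from (t : perm_word) N :=
  forall x s, N <= size x -> t (x ++ s) = t x ++ s.

Definition lex_monotone_from (t : perm_word) N :=
  forall x x' w w', N <= size x -> N <= size x' ->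
    lexlt (app_stream x w) (app_stream x' w') ->
    lexlt (app_stream (t x) w) (app_stream (t x') w').

Definition QF_depth (t : perm_word) N :=
  bijective t /\ suffix_stable_from t N /\ lex_monotone_from t N.

Lemma QF_depth_inQF t N : QF_depth t N -> inQF t.
Proof.
move=> [bij [stab mono]]; split.
  split=> //; exists (words_below N) => x xN.
  have leNx : N <= size x.
    by rewrite leqNgt; apply: contra xN; exact: mem_words_below.
  by rewrite -!cats1 !stab.
exists (words N); split; [split; [exact: uniq_words|split] | split].
- move=> l l' /size_words sl /size_words sl'.
  by apply: contra; rewrite prefixE sl -sl' take_size eq_sym.
- move=> w; case: (leqP N (size w)) => [leNw|ltwN].
    exists (take N w); last by rewrite prefix_take.
    by rewrite -{2}(size_takel leNw) mem_words.
  exists (w ++ nseq (N - size w) false); last by rewrite prefix_prefix orbT.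
  have sN : size (w ++ nseq (N - size w) false) = N.
    by rewrite size_cat size_nseq subnKC // ltnW.
  by rewrite -[in words N]sN mem_words.
- by move=> l s /size_words sl; apply: stab; rewrite sl.
- by move=> l l' w w' /size_words sl /size_words sl'; apply: mono; rewrite ?sl ?sl'.
Qed.

Lemma inQF_QF_depth t : inQF t -> exists N, QF_depth t N.
Proof.
move=> [[bij _] [L [[_ [_ maxL]] [stab mono]]]].
set N := \max_(l <- L) size l; exists N; split=> //.
have split_long x : N <= size x -> exists l u, l \in L /\ x = l ++ u.
  move=> leNx; have [l lL] := maxL x; case/orP=> /prefixP[u lu].
    by exists l, u.
  exists l, [::]; split; rewrite // cats0 lu.
  have := leq_trans (leq_bigmax_seq (F := size) l lL isT) leNx.
  rewrite lu size_cat -{2}(addn0 (size x)) leq_add2l leqn0 size_eq0.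
  by move/eqP->; rewrite cats0.
split=> [x s /split_long[l [u [lL ->]]]|].
  by rewrite -catA !stab // catA.
move=> x x' w w' /split_long[l [u [lL ->]]] /split_long[l' [u' [lL' ->]]].
by rewrite !stab // !app_stream_cat; exact: mono.
Qed.

Lemma size_suffix_stable t N M x :
  suffix_stable_from t N -> N + M <= size x -> M <= size (t x).
Proof.
move=> stab leNMx; have leNx : N <= size x := leq_trans (leq_addr M N) leNMx.
rewrite -(cat_take_drop N x) stab ?size_takel // size_cat size_drop.
by rewrite (leq_trans _ (leq_addl _ _)) // leq_subRL.
Qed.

Lemma QF_depth_comp g h Ng Nh :
  QF_depth g Ng -> QF_depth h Nh -> QF_depth (g \o h) (Nh + Ng).
Proof.
move=> [gbij [gstab gmono]] [hbij [hstab hmono]]; split; first exact: bij_comp.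
have leN x : Nh + Ng <= size x -> Nh <= size x := leq_trans (leq_addr Ng Nh).
split=> [x s lex|x x' w w' lex lex' lt_xx'] /=.
  by rewrite hstab ?leN // gstab // (size_suffix_stable hstab lex).
apply: gmono; rewrite ?(size_suffix_stable hstab) //.
by apply: hmono; rewrite ?leN.
Qed.

Lemma alphaK : cancel alpha alpha_inv.
Proof. by case=> [|[] [|[] s]]. Qed.

Lemma alpha_invK : cancel alpha_inv alpha.
Proof. by case=> [|[] [|[] s]]. Qed.

Lemma alpha_comp_inv : alpha \o alpha_inv = id.
Proof. by apply: functional_extensionality => x; rewrite /= alpha_invK. Qed.

Lemma alpha_inv_comp : alpha_inv \o alpha = id.
Proof. by apply: functional_extensionality => x; rewrite /= alphaK. Qed.

Lemma QF_depth_alpha : QF_depth alpha 2.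
Proof.
split; first exact: Bijective alphaK alpha_invK.
split=> [[|a [|b x]] s //= _|]; first by case: a; case: b.
move=> [|a [|b x]] [|a' [|b' x']] w w' //= _ _.
case: a; case: b; case: a'; case: b' => /=;
  rewrite ?app_stream_cons !lexlt_scons; intuition congruence.
Qed.

Lemma QF_depth_alpha_inv : QF_depth alpha_inv 2.
Proof.
split; first exact: Bijective alpha_invK alphaK.
split=> [[|a [|b x]] s //= _|]; first by case: a; case: b.
move=> [|a [|b x]] [|a' [|b' x']] w w' //= _ _.
case: a; case: b; case: a'; case: b' => /=;
  rewrite ?app_stream_cons !lexlt_scons; intuition congruence.
Qed.

Lemma inQF_comp g h : inQF g -> inQF h -> inQF (g \o h).
Proof.
move=> /inQF_QF_depth[Ng gN] /inQF_QF_depth[Nh hN].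
exact: QF_depth_inQF (QF_depth_comp gN hN).
Qed.

Lemma inQF_id : inQF id.
Proof. by apply: (@QF_depth_inQF _ 0); split; [exists id | split]. Qed.

Lemma inQF_iter n g : inQF g -> inQF (iter n g).
Proof. by move=> gQ; elim: n => [|n IH]; [exact: inQF_id | exact: inQF_comp]. Qed.

Lemma inQF_alpha : inQF alpha.
Proof. exact: QF_depth_inQF QF_depth_alpha. Qed.

Lemma inQF_alpha_inv : inQF alpha_inv.
Proof. exact: QF_depth_inQF QF_depth_alpha_inv. Qed.

(** * Normal forms alpha^m h alpha^-n *)

(* An order-preserving homeomorphism fixes the leftmost point 000... *)
Lemma QF_depth_nseq_false t N :
  QF_depth t N -> exists j, t (nseq N false) = nseq j false.
Proof.
move=> [[ti tK tiK] [stab mono]].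
set B := \max_(x <- words_below N) size (t x).
set z := ti (nseq B.+1 false).
have tz : t z = nseq B.+1 false by rewrite /z tiK.
have leNz : N <= size z.
  rewrite leqNgt; apply/negP => /mem_words_below zN.
  have := leq_bigmax_seq (P := xpredT) (F := fun x => size (t x)) z zN isT.
  by rewrite tz size_nseq -/B ltnn.
have [x [u [sx zxu]]] : exists x u, size x = N /\ z = x ++ u.
  by exists (take N z), (drop N z); rewrite cat_take_drop size_takel.
have tx0 : t x = nseq (size (t x)) false.
  apply/all_pred1P; have := all_pred1_nseq false B.+1.
  by rewrite -tz zxu stab ?sx // all_cat => /andP[].
have x0 : x = nseq N false.
  have [xt|] := boolP (true \in x); last by rewrite -sx; exact: notin_true_nseq.
  have := mono (nseq N false) x zero_stream zero_stream.
  rewrite size_nseq sx tx0 !app_stream_nseq_false.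
  by move=> /(_ (leqnn N) (leqnn N) (lexlt_zero_stream_app xt)) /lexlt_zero_stream_r.
by exists (size (t x)); rewrite -x0.
Qed.

Lemma iter_cancel (T : Type) (f g : T -> T) n :
  cancel f g -> cancel (iter n f) (iter n g).
Proof. by move=> fK; elim: n => [|n IH] x //; rewrite iterSr iterS fK IH. Qed.

Lemma iter_alpha_head_false n w :
  head false w = false -> iter n alpha w = nseq n false ++ w.
Proof.
move=> w0; elim: n => [|n IH] //; rewrite iterS IH.
by case: n {IH} => [|n] /=; [case: w w0 => [|[] s] | ].
Qed.

Lemma iter_theta d h x :
  iter d theta h x = iter d alpha_inv (h (iter d alpha x)).
Proof. by elim: d x => [|d IH] x //; rewrite iterS /theta /= IH -iterSr. Qed.

Lemma theta_comp g h : theta (g \o h) = theta g \o theta h.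
Proof. by apply: functional_extensionality => x; rewrite /theta /= alpha_invK. Qed.

Lemma theta_inj : injective theta.
Proof.
move=> g h /(congr1 (fun F => alpha \o F \o alpha_inv)) E.
apply: functional_extensionality => w.
by have := congr1 (@^~ w) E; rewrite /theta /= !alpha_invK.
Qed.

Lemma inQF1_id : inQF1 id.
Proof. by split; first exact: inQF_id. Qed.

Lemma inQF1_comp g h : inQF1 g -> inQF1 h -> inQF1 (g \o h).
Proof.
move=> [gQ g0] [hQ h0]; split; first exact: inQF_comp.
by move=> w w0 /=; rewrite h0 // g0.
Qed.

Lemma inQF1_theta h : inQF1 h -> inQF1 (theta h).
Proof.
move=> [hQ h0]; split.
  exact: inQF_comp (inQF_comp inQF_alpha_inv hQ) inQF_alpha.
by case=> [|[] s] //= _; rewrite /theta /= h0.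
Qed.

Lemma inQF1_iter_theta d h : inQF1 h -> inQF1 (iter d theta h).
Proof. by move=> hQ; elim: d => [|d IH] //; exact: inQF1_theta. Qed.

Definition hnn_form m (h : perm_word) n : perm_word :=
  iter m alpha \o h \o iter n alpha_inv.

Lemma hnn_form_exists t : inQF t -> exists m h n, inQF1 h /\ t = hnn_form m h n.
Proof.
case/inQF_QF_depth => N tN; have [j tN0] := QF_depth_nseq_false tN.
have [_ [stab _]] := tN.
exists j, (iter j alpha_inv \o t \o iter N alpha), N; split; last first.
  apply: functional_extensionality => x.
  by rewrite /hnn_form /= !(iter_cancel _ alpha_invK).
split.
  apply: inQF_comp (inQF_iter _ inQF_alpha).
  exact: inQF_comp (inQF_iter _ inQF_alpha_inv) (QF_depth_inQF tN).
move=> w w0 /=; rewrite iter_alpha_head_false // stab ?size_nseq // tN0.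
by rewrite -iter_alpha_head_false // (iter_cancel _ alphaK).
Qed.

Lemma hnn_form_shift m h n d :
  hnn_form (m + d) (iter d theta h) (n + d) = hnn_form m h n.
Proof.
apply: functional_extensionality => x; rewrite /hnn_form /=.
by rewrite iter_theta (addnC n d) !iterD !(iter_cancel _ alpha_invK).
Qed.

Lemma hnn_form_inj m m' h h' n : inQF1 h -> inQF1 h' ->
  hnn_form m h n = hnn_form m' h' n -> m = m' /\ h = h'.
Proof.
move=> [_ h0] [_ h'0] E.
have E' z : iter m alpha (h z) = iter m' alpha (h' z).
  have := congr1 (@^~ (iter n alpha z)) E.
  by rewrite /hnn_form /= !(iter_cancel _ alphaK).
have mm' : m = m'.
  have := congr1 size (E' [::]).
  by rewrite h0 // h'0 // !iter_alpha_head_false // !size_cat !size_nseq !addn0.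
split=> //; subst m'; apply: functional_extensionality => z.
by rewrite -[h z](iter_cancel m alphaK) E' (iter_cancel _ alphaK).
Qed.

Lemma hnn_form_comp_l m g n d h q :
  hnn_form m g n \o hnn_form (n + d) h q = hnn_form (m + d) (iter d theta g \o h) q.
Proof.
apply: functional_extensionality => x; rewrite /hnn_form /=.
by rewrite iter_theta !iterD !(iter_cancel _ alphaK) !(iter_cancel _ alpha_invK).
Qed.

Lemma hnn_form_comp_r m g p d h q :
  hnn_form m g (p + d) \o hnn_form p h q = hnn_form m (g \o iter d theta h) (q + d).
Proof.
apply: functional_extensionality => x; rewrite /hnn_form /=.
rewrite iter_theta (addnC p d) (addnC q d) !iterD.
by rewrite !(iter_cancel _ alphaK) !(iter_cancel _ alpha_invK).
Qed.

(** * The universal property of the HNN extension *)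

Local Notation "x ⋆ y" := (gmul x y) (at level 40, left associativity).

Section GroupFacts.

Variable K : group.
Implicit Types x y z : gcar K.

Lemma gmulrV x : x ⋆ ginv x = gone K.
Proof.
rewrite -[x ⋆ ginv x]gmul1 -{1}(gmulV (ginv x)) -gmulA [ginv x ⋆ (x ⋆ ginv x)]gmulA.
by rewrite gmulV gmul1 gmulV.
Qed.

Lemma gmulr1 x : x ⋆ gone K = x.
Proof. by rewrite -(gmulV x) gmulA gmulrV gmul1. Qed.

Lemma gmul_eq1_inv x y : x ⋆ y = gone K -> y = ginv x.
Proof. by move=> xy; rewrite -[y]gmul1 -(gmulV x) -gmulA xy gmulr1. Qed.

Lemma gmul_idem x : x ⋆ x = x -> x = gone K.
Proof. by move=> xx; rewrite -(gmulV x) -{3}xx gmulA gmulV gmul1. Qed.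

Definition gexp x n := iter n (gmul x) (gone K).

Lemma gexpS x n : gexp x n.+1 = x ⋆ gexp x n.
Proof. by []. Qed.

Lemma gexpD x m n : gexp x (m + n) = gexp x m ⋆ gexp x n.
Proof. by elim: m => [|m IH]; rewrite ?gmul1 // addSn !gexpS IH gmulA. Qed.

Lemma gexpSr x n : gexp x n.+1 = gexp x n ⋆ x.
Proof. by rewrite -addn1 gexpD /gexp /= gmulr1. Qed.

Lemma gexp_mulK x y n z : x ⋆ y = gone K -> z ⋆ gexp x n ⋆ gexp y n = z.
Proof.
move=> xy; rewrite -gmulA; suff -> : gexp x n ⋆ gexp y n = gone K by rewrite gmulr1.
elim: n => [|n IH]; first exact: gmul1.
by rewrite gexpSr gexpS gmulA -[gexp x n ⋆ x ⋆ y]gmulA xy gmulr1.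
Qed.

End GroupFacts.

Lemma hom_on_id G K (F : perm_word -> gcar K) : hom_on G F -> G id -> F id = gone K.
Proof. by move=> Fhom Gid; apply: gmul_idem; rewrite -(Fhom id id). Qed.

Lemma hom_on_inQF_iter K (F : perm_word -> gcar K) g n :
  hom_on inQF F -> inQF g -> F (iter n g) = gexp (F g) n.
Proof.
move=> Fhom gQ; elim: n => [|n IH]; first exact: hom_on_id inQF_id.
by rewrite gexpS -IH -Fhom //; exact: inQF_iter.
Qed.

Section HNNLift.

Variables (K : group) (k : gcar K) (f : perm_word -> gcar K).
Hypothesis f_hom : hom_on inQF1 f.
Hypothesis f_theta : forall h, inQF1 h -> ginv k ⋆ f h ⋆ k = f (theta h).

Definition hnn_val m h n := gexp k m ⋆ f h ⋆ gexp (ginv k) n.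

Let gexpK n z : z ⋆ gexp k n ⋆ gexp (ginv k) n = z.
Proof. exact: gexp_mulK (gmulrV k). Qed.

Let gexpVK n z : z ⋆ gexp (ginv k) n ⋆ gexp k n = z.
Proof. exact: gexp_mulK (gmulV k). Qed.

Lemma f_iter_theta d h :
  inQF1 h -> f (iter d theta h) = gexp (ginv k) d ⋆ f h ⋆ gexp k d.
Proof.
move=> hQ; elim: d => [|d IH]; first by rewrite gmul1 gmulr1.
rewrite iterS -f_theta; last exact: inQF1_iter_theta.
by rewrite IH gexpS gexpSr !gmulA.
Qed.

Lemma hnn_val_shift m h n d :
  inQF1 h -> hnn_val (m + d) (iter d theta h) (n + d) = hnn_val m h n.
Proof.
move=> hQ; rewrite /hnn_val f_iter_theta // (addnC n d) !gexpD !gmulA.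
by rewrite !gexpK.
Qed.

Lemma hnn_val_wd m h n m' h' n' : inQF1 h -> inQF1 h' ->
  hnn_form m h n = hnn_form m' h' n' -> hnn_val m h n = hnn_val m' h' n'.
Proof.
move=> hQ h'Q E.
rewrite -(hnn_val_shift m n n' hQ) -(hnn_val_shift m' n' n h'Q) (addnC n').
rewrite -(hnn_form_shift m h n n') -(hnn_form_shift m' h' n' n) (addnC n') in E.
by case: (hnn_form_inj (inQF1_iter_theta n' hQ) (inQF1_iter_theta n h'Q) E) => -> ->.
Qed.

Lemma hnn_val_comp_l m g n d h q : inQF1 g -> inQF1 h ->
  hnn_val m g n ⋆ hnn_val (n + d) h q = hnn_val (m + d) (iter d theta g \o h) q.
Proof.
move=> gQ hQ; have gdQ := inQF1_iter_theta d gQ.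
by rewrite /hnn_val f_hom // f_iter_theta // !gexpD !gmulA gexpVK gexpK.
Qed.

Lemma hnn_val_comp_r m g p d h q : inQF1 g -> inQF1 h ->
  hnn_val m g (p + d) ⋆ hnn_val p h q = hnn_val m (g \o iter d theta h) (q + d).
Proof.
move=> gQ hQ; have hdQ := inQF1_iter_theta d hQ.
rewrite /hnn_val f_hom // f_iter_theta // (addnC p d) (addnC q d) !gexpD !gmulA.
by rewrite gexpVK gexpK.
Qed.

(* The normal form is picked by [epsilon]; off QF the value is junk. *)
Definition hnn_lift (x : perm_word) : gcar K :=
  let p := epsilon (inhabits (0, id, 0))
    (fun p : nat * perm_word * nat => inQF1 p.1.2 /\ x = hnn_form p.1.1 p.1.2 p.2) in
  hnn_val p.1.1 p.1.2 p.2.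

Lemma hnn_lift_form m h n : inQF1 h -> hnn_lift (hnn_form m h n) = hnn_val m h n.
Proof.
move=> hQ; case: (epsilon_spec (inhabits (0, id, 0)) (fun p : nat * perm_word * nat =>
    inQF1 p.1.2 /\ hnn_form m h n = hnn_form p.1.1 p.1.2 p.2)).
  by exists (m, h, n).
by move=> pQ E; exact: esym (hnn_val_wd hQ pQ E).
Qed.

Lemma hnn_lift_hom : hom_on inQF hnn_lift.
Proof.
move=> x y /hnn_form_exists[m [g [n [gQ ->]]]] /hnn_form_exists[p [h [q [hQ ->]]]].
have [le_np|lt_pn] := leqP n p.
  rewrite -(subnKC le_np) hnn_form_comp_l !hnn_lift_form ?hnn_val_comp_l //.
  exact: inQF1_comp (inQF1_iter_theta _ gQ) hQ.
rewrite -(subnKC (ltnW lt_pn)) hnn_form_comp_r !hnn_lift_form ?hnn_val_comp_r //.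
exact: inQF1_comp gQ (inQF1_iter_theta _ hQ).
Qed.

Lemma hnn_lift_unique F : hom_on inQF F -> (forall g, inQF1 g -> F g = f g) ->
  F alpha = k -> forall x, inQF x -> F x = hnn_lift x.
Proof.
move=> Fhom Ff Fk x /hnn_form_exists[m [h [n [hQ ->]]]].
have Qa := inQF_alpha; have Qai := inQF_alpha_inv.
have F_alpha_inv : F alpha_inv = ginv k.
  apply: gmul_eq1_inv; rewrite -Fk -(Fhom _ _ Qa Qai) alpha_comp_inv.
  exact: hom_on_id Fhom inQF_id.
have QA := inQF_iter m Qa; have QB := inQF_iter n Qai.
rewrite hnn_lift_form // /hnn_form (Fhom _ _ (inQF_comp QA hQ.1) QB) (Fhom _ _ QA hQ.1).
by rewrite (hom_on_inQF_iter m Fhom Qa) (hom_on_inQF_iter n Fhom Qai) Fk F_alpha_inv Ff.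
Qed.

End HNNLift.

Lemma QF_is_HNN : is_HNN inQF1 theta inQF.
Proof.
exists (fun g => g), alpha, alpha_inv.
split; first by move=> g [].
split; first by [].
split; first exact: inQF_alpha.
split; first exact: inQF_alpha_inv.
split; first exact: alpha_comp_inv.
split; first exact: alpha_inv_comp.
split=> // K f k fhom ftheta; exists (hnn_lift k f).
split; first exact: hnn_lift_hom fhom ftheta.
split=> [g gQ|].
  by rewrite -[g]/(hnn_form 0 g 0) (hnn_lift_form ftheta 0 0 gQ) /hnn_val gmul1 gmulr1.
split.
  rewrite -[alpha]/(hnn_form 1 id 0) (hnn_lift_form ftheta 1 0 inQF1_id).
  by rewrite /hnn_val /gexp /= (hom_on_id fhom inQF1_id) !gmulr1.
exact: hnn_lift_unique ftheta.
Qed.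

(** * QF(1) is isomorphic to QF *)

Definition restrict1 (g : perm_word) : perm_word := fun s => behead (g (true :: s)).

Definition extend1 (k : perm_word) : perm_word :=
  fun w => if w is true :: s then true :: k s else w.

Definition fixes_left (g : perm_word) := forall w, head false w = false -> g w = w.

Lemma fixes_left_head_true g s : injective g -> fixes_left g ->
  g (true :: s) = true :: behead (g (true :: s)).
Proof.
move=> g_inj g0; case E: (g (true :: s)) => [|[] u] //.
  by have := g_inj _ _ (etrans E (esym (g0 [::] erefl))).
by have := g_inj _ _ (etrans E (esym (g0 (false :: u) erefl))).
Qed.

Lemma inQF1_true g s : inQF1 g -> g (true :: s) = true :: restrict1 g s.
Proof. by move=> [[[gbij _] _] g0]; exact: fixes_left_head_true (bij_inj gbij) g0. Qed.

Lemma inQF_restrict1 g : inQF1 g -> inQF (restrict1 g).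
Proof.
move=> [gQ g0]; have [N [[gi gK giK] [stab mono]]] := inQF_QF_depth gQ.
have gi0 : fixes_left gi by move=> w w0; rewrite -{1}(g0 w w0) gK.
have gt s := fixes_left_head_true s (can_inj gK) g0.
have git s := fixes_left_head_true s (can_inj giK) gi0.
apply: (@QF_depth_inQF _ N); split; [|split].
- by exists (restrict1 gi) => s; rewrite /restrict1; [rewrite -gt gK | rewrite -git giK].
- by move=> x s lex; rewrite /restrict1 -cat_cons stab ?(leqW lex) // gt.
- move=> x x' w w' lex lex' lt_xx'.
  have := mono (true :: x) (true :: x') w w' (leqW lex) (leqW lex').
  rewrite (gt x) (gt x') !app_stream_cons !lexlt_scons; intuition congruence.
Qed.

Lemma inQF1_extend1 k : inQF k -> inQF1 (extend1 k).
Proof.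
case/inQF_QF_depth => N [[ki kK kiK] [stab mono]]; split; last by case=> [|[] s].
apply: (@QF_depth_inQF _ N.+1); split; [|split].
- by exists (extend1 ki) => -[|[] s] //=; rewrite ?kK ?kiK.
- by move=> [|[] x] s //= lex; rewrite stab.
- move=> [|a x] [|a' x'] w w' //= lex lex'.
  case: a; case: a'; rewrite !app_stream_cons !lexlt_scons; try intuition congruence.
  by move=> [[]|[_ lt_xx']] //; right; split=> //; exact: mono.
Qed.

Lemma restrict1_extend1 k : restrict1 (extend1 k) = k.
Proof. exact: functional_extensionality. Qed.

Lemma restrict1_iso : iso_on inQF1 inQF restrict1.
Proof.
split; first exact: inQF_restrict1.
split=> [g h _ hQ|].
  by apply: functional_extensionality => s; rewrite /restrict1 /= inQF1_true.
split=> [g h gQ hQ E|k kQ].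
  apply: functional_extensionality => -[|[] s]; first by rewrite gQ.2 // hQ.2.
    by rewrite !inQF1_true // E.
  by rewrite gQ.2 // hQ.2.
by exists (extend1 k); [exact: inQF1_extend1 | exact: restrict1_extend1].
Qed.

Theorem lemma2p7 :
  (exists phi, iso_on inQF1 inQF phi) /\
  ((forall h, inQF1 h -> inQF1 (theta h)) /\
   (forall g h, inQF1 g -> inQF1 h -> theta (g \o h) = theta g \o theta h) /\
   (forall g h, inQF1 g -> inQF1 h -> theta g = theta h -> g = h)) /\
  is_HNN inQF1 theta inQF.
Proof.
split; first by exists restrict1; exact: restrict1_iso.
split; last exact: QF_is_HNN.
split; first exact: inQF1_theta.
by split=> g h _ _; [exact: theta_comp | exact: theta_inj].
Qed.
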